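(* Let $n\ge 1$ and let $h$ be a hole of the triangular board $T_n$. Suppose a sequence of jumps on $T_n$ starts from the position in which every hole holds a peg except $h$, and ends in the position in which exactly one peg remains, located at $h$ (a solution to the complement problem at $h$). Then none of the board positions occurring in this sequence has $120^\circ$ rotational symmetry, i.e., no such position $P$ satisfies $P(r(g))=P(g)$ for every hole $g$, where $r(x,y)=(y-x,\,n-1-x)$.
   Context: The triangular board $T_n$ is the set of holes with integer skew coordinates $(x,y)$ satisfying $0\le x\le y\le n-1$. A board position $P$ assigns to each hole either a peg or no peg. A jump takes a peg at hole $p$, jumps it over a peg at an adjacent hole $p+d$ into an empty hole $p+2d$, where $d$ is one of the six directions $(\pm1,0)$, $(0,\pm1)$, $(1,1)$, $(-1,-1)$ and all three holes lie in $T_n$; the jumped-over peg is removed. The map $r(x,y)=(y-x,n-1-x)$ is the counterclockwise rotation of $T_n$ by $120^\circ$ in skew coordinates; a position has $120^\circ$ rotational symmetry if it is invariant under $r$. *)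

(* holes are integer pairs (x,y) in skew coordinates. *)
From Stdlib Require Import ZArith.
Open Scope Z_scope.

Definition hole := (Z * Z)%type.

Definition in_board (n : nat) (g : hole) : Prop :=
  0 <= fst g /\ fst g <= snd g /\ snd g <= Z.of_nat n - 1.

(* a board position: peg (true) or no peg (false) at each hole;
   values outside T_n are irrelevant and are never inspected *)
Definition position := hole -> bool.

Definition hadd (g d : hole) : hole := (fst g + fst d, snd g + snd d).

Definition is_dir (d : hole) : Prop :=
  d = (1,0) \/ d = (-1,0) \/ d = (0,1) \/ d = (0,-1) \/ d = (1,1) \/ d = (-1,-1).

Definition jump (n : nat) (P Q : position) : Prop :=
  exists (p d : hole),
    is_dir d /\
    in_board n p /\ in_board n (hadd p d) /\ in_board n (hadd (hadd p d) d) /\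
    P p = true /\ P (hadd p d) = true /\ P (hadd (hadd p d) d) = false /\
    Q p = false /\ Q (hadd p d) = false /\ Q (hadd (hadd p d) d) = true /\
    (forall g, in_board n g -> g <> p -> g <> hadd p d ->
       g <> hadd (hadd p d) d -> Q g = P g).

Definition start_pos (n : nat) (h : hole) (P : position) : Prop :=
  forall g, in_board n g -> (P g = true <-> g <> h).

Definition final_pos (n : nat) (h : hole) (P : position) : Prop :=
  forall g, in_board n g -> (P g = true <-> g = h).

Definition rot (n : nat) (g : hole) : hole :=
  (snd g - fst g, Z.of_nat n - 1 - fst g).

Definition rot_symmetric (n : nat) (P : position) : Prop :=
  forall g, in_board n g -> P (rot n g) = P g.

(* Colour the hole (x,y) by (x + y) mod 3. The three holes involved in a jump
   carry three different colours, so a jump flips the parity of the number of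
   pegs of every colour, and the pairwise sums of these three parities are
   invariant.  In the final position exactly one colour has odd parity, so along
   a solution the three parities are never all equal.  The rotation r shifts
   colours by n - 1; when n is not 1 mod 3, a symmetric position therefore has
   all three parities equal.  When n is 1 mod 3 the full board has parities of
   colours 0 and 1 that differ (three consecutive rows are colour-balanced and
   T_1 is a single hole of colour 0), which makes the start and final positions
   incompatible: there is no solution at all. *)

From Stdlib Require Import ZArith List Lia Permutation Btauto.
Import ListNotations.
Open Scope bool_scope.
Open Scope Z_scope.

Section XorSum.

Context {A : Type}.

Fixpoint xor_sum (l : list A) (f : A -> bool) : bool :=
  match l with
  | [] => false
  | x :: l => xorb (f x) (xor_sum l f)
  end.

Lemma xor_sum_app (l1 l2 : list A) (f : A -> bool) :
  xor_sum (l1 ++ l2) f = xorb (xor_sum l1 f) (xor_sum l2 f).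
Proof. induction l1 as [|x l1 IH]; simpl; [reflexivity|rewrite IH; btauto]. Qed.

Lemma xor_sum_ext (l : list A) (f g : A -> bool) :
  (forall x, In x l -> f x = g x) -> xor_sum l f = xor_sum l g.
Proof. induction l; simpl; intros H; auto. rewrite H, IHl; auto. Qed.

Lemma xor_sum_xorb (l : list A) (f g : A -> bool) :
  xor_sum l (fun x => xorb (f x) (g x)) = xorb (xor_sum l f) (xor_sum l g).
Proof. induction l as [|x l IH]; simpl; [reflexivity|rewrite IH; btauto]. Qed.

Lemma xor_sum_false (l : list A) (f : A -> bool) :
  (forall x, In x l -> f x = false) -> xor_sum l f = false.
Proof. induction l; simpl; intros H; auto. rewrite H, IHl; auto. Qed.

Lemma xor_sum_true (l : list A) : xor_sum l (fun _ => true) = Nat.odd (length l).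
Proof.
  induction l as [|x l IH]; simpl; [reflexivity|].
  now rewrite IH, Nat.odd_succ, <- Nat.negb_odd.
Qed.

Lemma xor_sum_perm (l l' : list A) (f : A -> bool) :
  Permutation l l' -> xor_sum l f = xor_sum l' f.
Proof. induction 1; simpl; try congruence. btauto. Qed.

Lemma xor_sum_support (l D : list A) (f : A -> bool) :
  NoDup l -> NoDup D -> incl D l -> (forall x, In x l -> ~ In x D -> f x = false) ->
  xor_sum l f = xor_sum D f.
Proof.
  revert l; induction D as [|d D IH]; intros l Hl HD Hincl Hf.
  { apply xor_sum_false; auto. }
  destruct (in_split d l (Hincl d (or_introl eq_refl))) as (l1 & l2 & ->).
  inversion HD as [|? ? HdD HD']; subst.
  rewrite (xor_sum_perm _ _ f (Permutation_sym (Permutation_middle l1 l2 d))).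
  simpl; f_equal; apply IH; auto.
  - exact (NoDup_remove_1 _ _ _ Hl).
  - intros x Hx.
    assert (Hx' : In x (l1 ++ d :: l2)) by (apply Hincl; now right).
    rewrite in_app_iff in *; simpl in Hx'.
    destruct Hx' as [| [-> |]]; tauto.
  - intros x Hx HxD; apply Hf.
    + rewrite in_app_iff in *; simpl; tauto.
    + intros [-> |]; [exact (NoDup_remove_2 _ _ _ Hl Hx)|tauto].
Qed.

End XorSum.

Lemma xor_sum_map {A B : Type} (g : B -> A) (l : list B) (f : A -> bool) :
  xor_sum (map g l) f = xor_sum l (fun x => f (g x)).
Proof. induction l; simpl; congruence. Qed.

Section ChainInvariant.

Context {A B : Type} (R : A -> A -> Prop) (F : A -> B).

Lemma chain_invariant (s : nat -> A) (k : nat) :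
  (forall P Q, R P Q -> F Q = F P) ->
  (forall i, (i < k)%nat -> R (s i) (s (S i))) ->
  forall i, (i <= k)%nat -> F (s i) = F (s 0%nat).
Proof.
  intros HF Hs i Hi; induction i as [|i IH]; [reflexivity|].
  rewrite (HF (s i)) by (apply Hs; lia); apply IH; lia.
Qed.

End ChainInvariant.

Definition color (g : hole) : Z := (fst g + snd g) mod 3.

Lemma color_range (g : hole) : 0 <= color g < 3.
Proof. apply Z.mod_pos_bound; lia. Qed.

Lemma mod3_progression (a b d e c : Z) :
  b = a + e -> d = a + 2 * e -> e mod 3 <> 0 -> 0 <= c < 3 ->
  xorb (a mod 3 =? c) (xorb (b mod 3 =? c) (d mod 3 =? c)) = true.
Proof.
  intros -> -> He Hc.
  rewrite (Zplus_mod a), (Zplus_mod a (2 * e)), (Zmult_mod 2 e).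
  assert (Ha : a mod 3 = 0 \/ a mod 3 = 1 \/ a mod 3 = 2) by (Z.div_mod_to_equations; lia).
  assert (He' : e mod 3 = 1 \/ e mod 3 = 2) by (Z.div_mod_to_equations; lia).
  assert (Hc' : c = 0 \/ c = 1 \/ c = 2) by lia.
  destruct Ha as [-> | [-> | ->]], He' as [-> | ->], Hc' as [-> | [-> | ->]]; reflexivity.
Qed.

Definition board_row (y : nat) : list hole :=
  map (fun x => (Z.of_nat x, Z.of_nat y)) (seq 0 (S y)).

Fixpoint board_list (n : nat) : list hole :=
  match n with
  | O => []
  | S n => board_list n ++ board_row n
  end.

Lemma in_board_row (y : nat) (g : hole) :
  In g (board_row y) <-> 0 <= fst g <= Z.of_nat y /\ snd g = Z.of_nat y.
Proof.
  unfold board_row; rewrite in_map_iff; split.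
  - intros [x [<- Hx]]; apply in_seq in Hx; simpl; lia.
  - destruct g as [a b]; simpl; intros Hab.
    exists (Z.to_nat a); rewrite in_seq; split; [f_equal|]; lia.
Qed.

Lemma in_board_list (n : nat) (g : hole) : In g (board_list n) <-> in_board n g.
Proof.
  unfold in_board; induction n as [|n IH]; cbn [board_list].
  - split; [contradiction | lia].
  - rewrite in_app_iff, IH, in_board_row; lia.
Qed.

Lemma board_list_NoDup (n : nat) : NoDup (board_list n).
Proof.
  induction n as [|n IH]; simpl; [constructor|].
  apply NoDup_app; auto.
  - apply FinFun.Injective_map_NoDup; [|apply seq_NoDup].
    intros a b E; injection E; lia.
  - intros g Hg Hg'; apply in_board_list in Hg; apply in_board_row in Hg'.
    unfold in_board in Hg; lia.
Qed.

Definition color_parity (n : nat) (c : Z) (P : position) : bool :=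
  xor_sum (board_list n) (fun g => (color g =? c) && P g).

Lemma color_parity_update (n : nat) (c : Z) (P Q : position) (D : list hole) :
  NoDup D -> (forall g, In g D -> in_board n g) ->
  (forall g, in_board n g -> ~ In g D -> Q g = P g) ->
  color_parity n c Q =
  xorb (color_parity n c P) (xor_sum D (fun g => (color g =? c) && xorb (P g) (Q g))).
Proof.
  intros HD HDn HPQ; unfold color_parity.
  rewrite <- (xor_sum_support (board_list n) D); try apply board_list_NoDup; auto.
  - rewrite <- xor_sum_xorb; apply xor_sum_ext; intros g _; btauto.
  - intros g Hg; apply in_board_list; auto.
  - intros g Hg HgD; apply in_board_list in Hg; rewrite HPQ by auto; btauto.
Qed.

Lemma jump_color_parity (n : nat) (c : Z) (P Q : position) :
  0 <= c < 3 -> jump n P Q -> color_parity n c Q = negb (color_parity n c P).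
Proof.
  intros Hc (p & d & Hd & Hp1 & Hp2 & Hp3 & HP1 & HP2 & HP3 & HQ1 & HQ2 & HQ3 & Hrest).
  assert (He : (fst d + snd d) mod 3 <> 0).
  { destruct Hd as [-> | [-> | [-> | [-> | [-> | ->]]]]]; discriminate. }
  assert (Hd0 : d <> (0, 0)) by (intros ->; apply He; reflexivity).
  destruct p as [x y], d as [a b]; unfold hadd in *; cbn [fst snd] in *.
  rewrite (color_parity_update n c P Q [(x, y); (x + a, y + b); (x + a + a, y + b + b)]).
  - cbn [xor_sum]; rewrite HP1, HP2, HP3, HQ1, HQ2, HQ3; simpl xorb.
    rewrite !Bool.andb_true_r, Bool.xorb_false_r.
    unfold color; cbn [fst snd].
    rewrite (mod3_progression (x + y) _ _ (a + b)) by (lia || assumption).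
    now destruct (color_parity n c P).
  - repeat constructor; simpl; intros H; repeat destruct H as [H | H];
      try injection H; try contradiction; intros; apply Hd0; f_equal; lia.
  - intros g [<- | [<- | [<- | []]]]; assumption.
  - intros g Hg HgD; apply Hrest; auto; intros ->; apply HgD; simpl; tauto.
Qed.

Lemma rot_in_board (n : nat) (g : hole) : in_board n g -> in_board n (rot n g).
Proof. unfold in_board, rot; simpl; lia. Qed.

Lemma rot_injective (n : nat) : FinFun.Injective (rot n).
Proof. intros [a b] [a' b'] E; unfold rot in E; simpl in E; injection E; intros; f_equal; lia. Qed.

Lemma rot_rot_rot (n : nat) (g : hole) : rot n (rot n (rot n g)) = g.
Proof. destruct g; unfold rot; simpl; f_equal; ring. Qed.

Lemma board_list_rot (n : nat) : Permutation (board_list n) (map (rot n) (board_list n)).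
Proof.
  apply NoDup_Permutation.
  - apply board_list_NoDup.
  - apply FinFun.Injective_map_NoDup; [apply rot_injective | apply board_list_NoDup].
  - intros g; rewrite in_map_iff, in_board_list; split.
    + intros Hg; exists (rot n (rot n g)); rewrite rot_rot_rot, in_board_list.
      auto using rot_in_board.
    + intros [g' [<- Hg']]; apply rot_in_board, in_board_list, Hg'.
Qed.

Lemma color_rot (n : nat) (g : hole) : color (rot n g) = (color g + Z.of_nat n - 1) mod 3.
Proof.
  unfold color, rot; simpl.
  Z.div_mod_to_equations; lia.
Qed.

Lemma rot_symmetric_color_parity (n : nat) (c : Z) (P : position) :
  rot_symmetric n P -> 0 <= c < 3 ->
  color_parity n ((c + Z.of_nat n - 1) mod 3) P = color_parity n c P.
Proof.
  intros Hsym Hc; unfold color_parity at 1.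
  rewrite (xor_sum_perm _ _ _ (board_list_rot n)), xor_sum_map.
  apply xor_sum_ext; intros g Hg; apply in_board_list in Hg.
  rewrite Hsym, color_rot by assumption; f_equal.
  pose proof (color_range g).
  apply Bool.eq_iff_eq_true; rewrite !Z.eqb_eq; Z.div_mod_to_equations; lia.
Qed.

Lemma rot_symmetric_color_parity_const (n : nat) (P : position) (c c' : Z) :
  Z.of_nat n mod 3 <> 1 -> rot_symmetric n P -> 0 <= c < 3 -> 0 <= c' < 3 ->
  color_parity n c P = color_parity n c' P.
Proof.
  intros Hn Hsym Hc Hc'.
  pose proof (Z.mod_pos_bound (c + Z.of_nat n - 1) 3 ltac:(lia)) as Hc1.
  assert (Hcases : c' = c \/ c' = (c + Z.of_nat n - 1) mod 3 \/
                   c' = ((c + Z.of_nat n - 1) mod 3 + Z.of_nat n - 1) mod 3)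
    by (Z.div_mod_to_equations; lia).
  destruct Hcases as [-> | [-> | ->]].
  - reflexivity.
  - symmetry; apply rot_symmetric_color_parity; assumption.
  - rewrite !rot_symmetric_color_parity; auto.
Qed.

Definition full_position : position := fun _ => true.

Definition empty_position : position := fun _ => false.

Lemma color_parity_empty (n : nat) (c : Z) : color_parity n c empty_position = false.
Proof. apply xor_sum_false; intros; apply Bool.andb_false_r. Qed.

Lemma color_parity_start (n : nat) (h : hole) (c : Z) (P : position) :
  in_board n h -> start_pos n h P ->
  color_parity n c P = xorb (color_parity n c full_position) (color h =? c).
Proof.
  intros Hh Hstart.
  assert (HPh : P h = false).
  { destruct (P h) eqn:E; [|reflexivity]. exfalso; now apply (Hstart h Hh) in E. }
  rewrite (color_parity_update n c full_position P [h]).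
  - cbn [xor_sum full_position]; rewrite HPh; simpl xorb.
    now rewrite Bool.andb_true_r, Bool.xorb_false_r.
  - repeat constructor; simpl; tauto.
  - intros g [<- | []]; assumption.
  - intros g Hg Hgh; apply (Hstart g Hg); intros ->; apply Hgh; simpl; tauto.
Qed.

Lemma color_parity_final (n : nat) (h : hole) (c : Z) (P : position) :
  in_board n h -> final_pos n h P -> color_parity n c P = (color h =? c).
Proof.
  intros Hh Hfinal.
  rewrite (color_parity_update n c empty_position P [h]), color_parity_empty.
  - cbn [xor_sum empty_position]; rewrite (proj2 (Hfinal h Hh) eq_refl); simpl xorb.
    now rewrite Bool.andb_true_r, Bool.xorb_false_r.
  - repeat constructor; simpl; tauto.
  - intros g [<- | []]; assumption.
  - intros g Hg Hgh; destruct (P g) eqn:E; [|reflexivity].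
    exfalso; apply Hgh; left; symmetry; apply (Hfinal g Hg), E.
Qed.
Lemma color_parity_full_band (n : nat) (c : Z) :
  0 <= c < 3 ->
  color_parity (S (S (S n))) c full_position =
  xorb (color_parity n c full_position) (Nat.odd n).
Proof.
  intros Hc; unfold color_parity, full_position.
  rewrite !(xor_sum_ext _ (fun g => (color g =? c) && true) (fun g => color g =? c))
    by (intros; apply Bool.andb_true_r).
  cbn [board_list]; rewrite !xor_sum_app; unfold board_row; rewrite !xor_sum_map.
  rewrite (seq_S (S (S n))), (seq_S (S n)), !xor_sum_app; cbn [xor_sum Nat.add].
  unfold color; cbn [fst snd].
  (* Rows n, n+1, n+2 split into the n+1 columns (x,n), (x,n+1), (x,n+2) and the
     triple (n+1,n+1), (n+1,n+2), (n+2,n+2); each of these contains every colour once. *)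
  assert (Hcolumns :
    xorb (xor_sum (seq 0 (S n)) (fun x => (Z.of_nat x + Z.of_nat n) mod 3 =? c))
      (xorb (xor_sum (seq 0 (S n)) (fun x => (Z.of_nat x + Z.of_nat (S n)) mod 3 =? c))
            (xor_sum (seq 0 (S n)) (fun x => (Z.of_nat x + Z.of_nat (S (S n))) mod 3 =? c)))
    = negb (Nat.odd n)).
  { replace (negb (Nat.odd n)) with (xor_sum (seq 0 (S n)) (fun _ => true))
      by now rewrite xor_sum_true, length_seq, Nat.odd_succ, Nat.negb_odd.
    rewrite <- !xor_sum_xorb; apply xor_sum_ext; intros x _.
    apply (mod3_progression _ _ _ 1); (lia || discriminate). }
  assert (Htop :
    xorb ((Z.of_nat (S (S n)) + Z.of_nat (S (S n))) mod 3 =? c)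
      (xorb ((Z.of_nat (S n) + Z.of_nat (S (S n))) mod 3 =? c)
            ((Z.of_nat (S n) + Z.of_nat (S n)) mod 3 =? c)) = true)
    by (apply (mod3_progression _ _ _ (-1)); (lia || discriminate)).
  rewrite (Bool.xorb_move_l_r_2 _ _ _ Hcolumns), (Bool.xorb_move_l_r_2 _ _ _ Htop).
  btauto.
Qed.

Lemma color_parity_full_mod3_1 (n : nat) :
  Z.of_nat n mod 3 = 1 ->
  xorb (color_parity n 0 full_position) (color_parity n 1 full_position) = true.
Proof.
  intros Hn.
  assert (Hm : exists m, n = (3 * m + 1)%nat)
    by (exists (Z.to_nat (Z.of_nat n / 3)); Z.div_mod_to_equations; lia).
  destruct Hm as [m ->]; clear Hn.
  induction m as [|m IH]; [reflexivity|].
  replace (3 * S m + 1)%nat with (S (S (S (3 * m + 1)))) by lia.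
  rewrite !color_parity_full_band by lia.
  rewrite <- IH; btauto.
Qed.

Lemma solution_color_parity_xorb (n : nat) (h : hole) (s : nat -> position) (k : nat)
    (c c' : Z) (j : nat) :
  in_board n h -> final_pos n h (s k) ->
  (forall i, (i < k)%nat -> jump n (s i) (s (S i))) ->
  0 <= c < 3 -> 0 <= c' < 3 -> (j <= k)%nat ->
  xorb (color_parity n c (s j)) (color_parity n c' (s j)) =
  xorb (color h =? c) (color h =? c').
Proof.
  intros Hh Hfinal Hjumps Hc Hc' Hj.
  set (F P := xorb (color_parity n c P) (color_parity n c' P)).
  assert (HF : forall P Q, jump n P Q -> F Q = F P)
    by (intros P Q HPQ; unfold F; rewrite !(jump_color_parity n _ P Q) by auto; btauto).
  change (F (s j) = xorb (color h =? c) (color h =? c')).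
  rewrite (chain_invariant _ F s k HF Hjumps j Hj),
    <- (chain_invariant _ F s k HF Hjumps k (Nat.le_refl k)).
  unfold F; rewrite !(color_parity_final n h _ (s k)) by assumption; reflexivity.
Qed.

Theorem corollary2p1 (n : nat) (h : hole) (s : nat -> position) (k : nat) :
  (1 <= n)%nat ->
  in_board n h ->
  start_pos n h (s 0%nat) ->
  final_pos n h (s k) ->
  (forall i, (i < k)%nat -> jump n (s i) (s (S i))) ->
  forall i, (i <= k)%nat -> ~ rot_symmetric n (s i).
Proof.
  intros _ Hh Hstart Hfinal Hjumps i Hi Hsym.
  pose proof (solution_color_parity_xorb n h s k) as Hgap.
  destruct (Z.eq_dec (Z.of_nat n mod 3) 1) as [Hn | Hn].
  - (* no solution exists at all *)
    pose proof (Hgap 0 1 0%nat Hh Hfinal Hjumps ltac:(lia) ltac:(lia) (Nat.le_0_l k)) as Hstart01.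
    rewrite !(color_parity_start n h _ (s 0%nat)) in Hstart01 by assumption.
    pose proof (color_parity_full_mod3_1 n Hn) as Hfull.
    revert Hstart01 Hfull; generalize (color_parity n 0 full_position),
      (color_parity n 1 full_position), (color h =? 0), (color h =? 1).
    intros [] [] [] []; discriminate.
  - pose proof (Hgap 0 1 i Hh Hfinal Hjumps ltac:(lia) ltac:(lia) Hi) as H01.
    pose proof (Hgap 1 2 i Hh Hfinal Hjumps ltac:(lia) ltac:(lia) Hi) as H12.
    rewrite (rot_symmetric_color_parity_const n (s i) 0 1), Bool.xorb_nilpotent in H01
      by (assumption || lia).
    rewrite (rot_symmetric_color_parity_const n (s i) 1 2), Bool.xorb_nilpotent in H12
      by (assumption || lia).
    pose proof (color_range h) as Hcol.
    assert (Hcases : color h = 0 \/ color h = 1 \/ color h = 2) by lia.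
    destruct Hcases as [E | [E | E]]; rewrite E in H01, H12; discriminate.
Qed.
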